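(* Let $H=(T_1,\dots,T_n,p_1,\dots,p_n)$ be a strategic game with a belief structure satisfying properties A and B. Then for every relaxation $R$ of $\overline{LR}$, every $i\in[1..n]$, every ordinal $\alpha$, every $\mu_i\in\mathcal B_i\,\dot\cap\,R^{\alpha}$ and every $s_i\in T_i$: if $s_i\in BR_{R^{\alpha}}(\mu_i)$ then $s_i\in BR_H(\mu_i)$.
   Context: A strategic game $H=(T_1,\dots,T_n,p_1,\dots,p_n)$ has nonempty strategy sets $T_i$ and real payoffs. A restriction is $G=(S_1,\dots,S_n)$ with $S_i\subseteq T_i$ (possibly empty), ordered by componentwise inclusion (a complete lattice with top $H$). A belief structure gives each player $i$ a nonempty belief set $\mathcal B_i$, an expected payoff $p_i:T_i\times\mathcal B_i\to\mathbb R$, and for each restriction $G$ a set $\mathcal B_i\,\dot\cap\,G\subseteq\mathcal B_i$, with $\mathcal B_i\,\dot\cap\,H=\mathcal B_i$. Property A: $G_1\subseteq G_2\subseteq H$ implies $\mathcal B_i\,\dot\cap\,G_1\subseteq\mathcal B_i\,\dot\cap\,G_2$ for all $i$. Best response: for $G=(S_1,\dots,S_n)$, $s_i\in T_i$ is in $BR_G(\mu_i)$ iff $p_i(s_i,\mu_i)\ge p_i(s_i',\mu_i)$ for all $s_i'\in S_i$. Property B: for every $i$ and every $\mu_i\in\mathcal B_i$, $BR_H(\mu_i)\neq\emptyset$. The operator $LR$ maps $G$ to $(S_1',\dots,S_n')$ with $S_i':=\{s_i\in T_i\mid\exists\mu_i\in\mathcal B_i\,\dot\cap\,G:\ s_i\in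 BR_G(\mu_i)\}$, and $\overline{LR}(G):=LR(G)\cap G$. Iterations: $T^0:=H$, $T^{\alpha+1}:=T(T^\alpha)$, $T^\beta:=\bigcap_{\alpha<\beta}T^\alpha$ for limit $\beta$. $R$ is a relaxation of $T$ if for all ordinals $\alpha$: (1) $T(R^\alpha)\subseteq R(R^\alpha)$; (2) if $T(R^\alpha)\subseteq R^\alpha$ then $R(R^\alpha)\subseteq R^\alpha$; (3) if $R(R^\alpha)=R^\alpha$ then $T(R^\alpha)=R^\alpha$. *)

From mathcomp Require Import all_boot all_order all_algebra.
From mathcomp Require Import reals.
Set Implicit Arguments. Unset Strict Implicit. Unset Printing Implicit Defensive.
Import Order.TTheory GRing.Theory Num.Theory.
Local Open Scope ring_scope.

Definition restriction (n : nat) (T : 'I_n -> Type) := forall i : 'I_n, T i -> Prop.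

Definition rtop (n : nat) (T : 'I_n -> Type) : restriction T := fun _ _ => True.
Arguments rtop {n} T _ _.

Definition rle (n : nat) (T : 'I_n -> Type) (G1 G2 : restriction T) : Prop :=
  forall i s, G1 i s -> G2 i s.

Definition req (n : nat) (T : 'I_n -> Type) (G1 G2 : restriction T) : Prop :=
  rle G1 G2 /\ rle G2 G1.

Definition rcap (n : nat) (T : 'I_n -> Type) (G1 G2 : restriction T) : restriction T :=
  fun i s => G1 i s /\ G2 i s.

(* An ordinal alpha is represented by an element a of a well-ordered type (A, lt):
   alpha is the order type of {b | lt b a}. *)
Definition is_wellorder (A : Type) (lt : A -> A -> Prop) : Prop :=
  (forall a b c, lt a b -> lt b c -> lt a c) /\
  (forall a b, lt a b \/ a = b \/ lt b a) /\
  well_founded lt.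

Definition is_pred (A : Type) (lt : A -> A -> Prop) (b a : A) : Prop :=
  lt b a /\ forall c, lt c a -> lt c b \/ c = b.

(* f is the transfinite iteration of the operator F along (A, lt):
   f(0) = H, f(b+1) = F(f b), f(limit a) = ⋂_{b<a} f b. *)
Definition is_iteration (n : nat) (T : 'I_n -> Type)
  (F : restriction T -> restriction T) (A : Type) (lt : A -> A -> Prop)
  (f : A -> restriction T) : Prop :=
  forall a,
    ((forall b, ~ lt b a) -> req (f a) (rtop T)) /\
    (forall b, is_pred lt b a -> req (f a) (F (f b))) /\
    ((exists b, lt b a) -> (forall b, ~ is_pred lt b a) ->
       req (f a) (fun i s => forall b, lt b a -> f b i s)).

(* R is a relaxation of Top: conditions (1)-(3) for every ordinal alpha,
   i.e. for every element a of every well-order along which R is iterated. *)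
Definition relaxation (n : nat) (T : 'I_n -> Type)
  (Top Rop : restriction T -> restriction T) : Prop :=
  forall (A : Type) (lt : A -> A -> Prop) (f : A -> restriction T),
    is_wellorder lt -> is_iteration Rop lt f ->
    forall a : A,
      rle (Top (f a)) (Rop (f a)) /\
      (rle (Top (f a)) (f a) -> rle (Rop (f a)) (f a)) /\
      (req (Rop (f a)) (f a) -> req (Top (f a)) (f a)).

Definition BR (R : realType) (n : nat) (T : 'I_n -> Type) (B : 'I_n -> Type)
  (ep : forall i, T i -> B i -> R) (G : restriction T) (i : 'I_n)
  (mu : B i) (s : T i) : Prop :=
  forall s', G i s' -> ep i s' mu <= ep i s mu.

(* bcap i G mu  <->  mu ∈ B_i ∩̇ G *)
Definition LR (R : realType) (n : nat) (T : 'I_n -> Type) (B : 'I_n -> Type)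
  (ep : forall i, T i -> B i -> R)
  (bcap : forall i, restriction T -> B i -> Prop) (G : restriction T) : restriction T :=
  fun i s => exists mu, bcap i G mu /\ BR ep G mu s.

Definition LRbar (R : realType) (n : nat) (T : 'I_n -> Type) (B : 'I_n -> Type)
  (ep : forall i, T i -> B i -> R)
  (bcap : forall i, restriction T -> B i -> Prop) (G : restriction T) : restriction T :=
  rcap (LR ep bcap G) G.

Definition propertyA (n : nat) (T : 'I_n -> Type) (B : 'I_n -> Type)
  (bcap : forall i, restriction T -> B i -> Prop) : Prop :=
  forall G1 G2 : restriction T, rle G1 G2 ->
    forall i mu, bcap i G1 mu -> bcap i G2 mu.

Definition propertyB (R : realType) (n : nat) (T : 'I_n -> Type) (B : 'I_n -> Type)
  (ep : forall i, T i -> B i -> R) : Prop :=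
  forall i (mu : B i), exists s, BR ep (rtop T) mu s.

From mathcomp Require Import all_boot all_order all_algebra.
From mathcomp Require Import reals.
From Stdlib Require Import Classical.
Import Order.POrderTheory.

(* By transfinite induction, every stage R^alpha contains each global best
   response t to each belief mu admissible at that stage.  Since LRbar(G) is
   included in G, condition (2) makes the iteration shrink, so by property A
   mu is also admissible at earlier stages.  At a successor stage beta+1, t is
   then in R^beta by induction and is a best response there, hence t is in
   LRbar(R^beta), which R(R^beta) contains by condition (1); limits are
   intersections.  The theorem follows by comparing s with such a t, which
   exists by property B. *)

Lemma ordinal_trichotomy {A : Type} (lt : A -> A -> Prop) (a : A) :
  (forall b, ~ lt b a) \/ (exists b, is_pred lt b a) \/
  ((exists b, lt b a) /\ forall b, ~ is_pred lt b a).
Proof.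
case: (classic (exists b, lt b a)) => [ex | nex].
  case: (classic (exists b, is_pred lt b a)) => [pr | npr]; first by right; left.
  by right; right; split => // b hb; apply: npr; exists b.
by left => b hb; apply: nex; exists b.
Qed.

Section WellOrderedIteration.

Context {n : nat} {T : 'I_n -> Type} {Rop : restriction T -> restriction T}.
Context {A : Type} {lt : A -> A -> Prop} {f : A -> restriction T}.
Hypothesis hf : is_iteration Rop lt f.

Lemma iteration_limit_sub {a b : A} :
  (forall c, ~ is_pred lt c a) -> lt b a -> rle (f a) (f b).
Proof.
move=> nopred hba j t hat.
have [_ [_ hL]] := hf a.
exact: (proj1 (hL (ex_intro _ b hba) nopred)) j t hat b hba.
Qed.

Context {Top : restriction T -> restriction T}.
Hypothesis Top_sub : forall G, rle (Top G) G.
Hypothesis hR : relaxation Top Rop.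
Hypothesis hwo : is_wellorder lt.

Lemma relaxation_succ_sub {a b : A} : is_pred lt b a -> rle (f a) (f b).
Proof.
move=> hba j t hat.
have [_ [hS _]] := hf a.
have [_ [shrink _]] := hR A lt f hwo hf b.
exact: shrink (Top_sub (f b)) j t (proj1 (hS b hba) j t hat).
Qed.

End WellOrderedIteration.

Section BeliefStructure.

Context {R : realType} {n : nat} {T : 'I_n -> Type} {B : 'I_n -> Type}.
Context {ep : forall i, T i -> B i -> R}.
Context {bcap : forall i, restriction T -> B i -> Prop}.

Lemma LRbar_sub (G : restriction T) : rle (LRbar ep bcap G) G.
Proof. by move=> i s []. Qed.

Lemma BR_topW (G : restriction T) i (mu : B i) s :
  BR ep (rtop T) mu s -> BR ep G mu s.
Proof. by move=> hs s' _; apply: hs. Qed.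

Lemma BR_top_in_LRbar {G : restriction T} {i} {mu : B i} {s} :
  bcap i G mu -> BR ep (rtop T) mu s -> G i s -> LRbar ep bcap G s.
Proof. by move=> hmu hs hGs; split => //; exists mu; split; last exact: BR_topW. Qed.

Lemma BR_top_trans {G : restriction T} {i} {mu : B i} {s t} :
  BR ep (rtop T) mu t -> G i t -> BR ep G mu s -> BR ep (rtop T) mu s.
Proof. by move=> ht hGt hs s' _; apply: le_trans (ht s' I) (hs t hGt). Qed.

Hypothesis hA : propertyA bcap.
Context {Rop : restriction T -> restriction T}.
Hypothesis hR : relaxation (LRbar ep bcap) Rop.
Context {A : Type} {lt : A -> A -> Prop} {f : A -> restriction T}.
Hypotheses (hwo : is_wellorder lt) (hf : is_iteration Rop lt f).

Lemma iteration_contains_BR_top {a : A} {i} {mu : B i} {t} :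
  bcap i (f a) mu -> BR ep (rtop T) mu t -> f a i t.
Proof.
have [_ [_ wf]] := hwo.
elim/(well_founded_ind wf): a i mu t => a IH i mu t hmu ht.
have [h0 [hS hL]] := hf a.
case: (ordinal_trichotomy lt a) => [zero | [[b hba] | [ex nopred]]].
- exact: (proj2 (h0 zero)).
- have fab := relaxation_succ_sub hf LRbar_sub hR hwo hba.
  have [incl _] := hR A lt f hwo hf b.
  apply: (proj2 (hS b hba)); apply: incl.
  have hmub := hA _ _ fab _ _ hmu.
  have tb := IH b (proj1 hba) i mu t hmub ht.
  exact: (BR_top_in_LRbar hmub ht tb).
- apply: (proj2 (hL ex nopred)) => b hba.
  have fab := iteration_limit_sub hf nopred hba.
  exact: IH hba i mu t (hA _ _ fab _ _ hmu) ht.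
Qed.

End BeliefStructure.

Theorem mainTheorem6
  (R : realType) (n : nat) (T : 'I_n -> Type) (T_ne : forall i, inhabited (T i))
  (pay : forall i : 'I_n, (forall j, T j) -> R)
  (B : 'I_n -> Type) (B_ne : forall i, inhabited (B i))
  (ep : forall i, T i -> B i -> R)
  (bcap : forall i, restriction T -> B i -> Prop)
  (bcap_top : forall i mu, bcap i (rtop T) mu)
  (hA : propertyA bcap) (hB : propertyB ep)
  (Rop : restriction T -> restriction T)
  (hR : relaxation (LRbar ep bcap) Rop)
  (i : 'I_n)
  (A : Type) (lt : A -> A -> Prop) (f : A -> restriction T)
  (hwo : is_wellorder lt) (hf : is_iteration Rop lt f) (a : A)
  (mu : B i) (hmu : bcap i (f a) mu) (s : T i) :
  BR ep (f a) mu s -> BR ep (rtop T) mu s.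
Proof.
have [t ht] := hB i mu.
have t_in_fa := iteration_contains_BR_top hA hR hwo hf hmu ht.
exact: BR_top_trans ht t_in_fa.
Qed.
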